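(* Let $n\ge2$, $\kappa\ge1$ and $G\in\mathcal G_{[n;\kappa]}$ with structure vector $V_G\in\mathbb R^{n\kappa^n}$. Then $G$ is skew-symmetric if and only if $$V_G=V_G\left(P_\sigma\otimes \mathrm{sgn}(\sigma)T_\sigma\right)\quad\text{for all }\sigma\in\mathbf S_n.$$
   Context: $\delta_m^j$ is the $j$-th column of $I_m$, $\mathbf 1_m$ the all-ones column vector of length $m$. For $\sigma\in\mathbf S_n$, $P_\sigma=[\delta_n^{\sigma(1)},\dots,\delta_n^{\sigma(n)}]\in\mathbb R^{n\times n}$. For $i=1,\dots,n$, $\Phi_i=\mathbf 1_{\kappa^{i-1}}^T\otimes I_\kappa\otimes\mathbf 1_{\kappa^{n-i}}^T\in\mathbb R^{\kappa\times\kappa^n}$. The Khatri–Rao product of $A\in\mathbb R^{p\times m}$ and $B\in\mathbb R^{q\times m}$ is $A*B=[\mathrm{Col}_1(A)\otimes\mathrm{Col}_1(B),\dots,\mathrm{Col}_m(A)\otimes\mathrm{Col}_m(B)]$, and $T_\sigma=\Phi_{\sigma^{-1}(1)}*\cdots*\Phi_{\sigma^{-1}(n)}\in\mathbb R^{\kappa^n\times\kappa^n}$. A finite game $G\in\mathcal G_{[n;\kappa]}$ has players $\{1,\dots,n\}$, each with strategy set $\{1,\dots,\kappa\}$, strategy $j$ identified with $\delta_\kappa^j$, and payoffs $c_i$; $V_i^c\in\mathbb R^{\kappa^n}$ is the unique row vector with $c_i(x_1,\dots,x_n)=V_i^c(x_1\otimes\cdots\otimes x_n)$, and $V_G=[V_1^c,\dots,V_n^c]$.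 $G$ is skew-symmetric if for every $\sigma\in\mathbf S_n$, every $i$ and every profile, $c_i(x_1,\dots,x_n)=\mathrm{sgn}(\sigma)\,c_{\sigma(i)}(x_{\sigma^{-1}(1)},\dots,x_{\sigma^{-1}(n)})$. *)

From mathcomp Require Import all_boot all_order all_algebra.
From mathcomp Require Import fingroup perm.
Set Implicit Arguments. Unset Strict Implicit. Unset Printing Implicit Defensive.
Import GRing.Theory Num.Theory.
Local Open Scope ring_scope.

(* Conventions: indices are 0-based.  Strategy j : 'I_k of a player is
   identified with delta_k^j (the j-th column of I_k).  Kronecker products use
   the standard convention: index (a, b) of A (x) B (A with m2 rows/cols in B)
   is a * m2 + b. *)

Lemma divord_proof m1 m2 (r : 'I_(m1 * m2)) : (r %/ m2 < m1)%N.
Proof.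
case: m2 r => [|m2] r; first by case: r => r; rewrite muln0.
by rewrite ltn_divLR.
Qed.

Lemma modord_proof m1 m2 (r : 'I_(m1 * m2)) : (r %% m2 < m2)%N.
Proof.
case: m2 r => [|m2] r; first by case: r => r; rewrite muln0.
by rewrite ltn_pmod.
Qed.

Definition divord m1 m2 (r : 'I_(m1 * m2)) : 'I_m1 := Ordinal (divord_proof r).
Definition modord m1 m2 (r : 'I_(m1 * m2)) : 'I_m2 := Ordinal (modord_proof r).

Definition kron (R : pzRingType) m1 n1 m2 n2 (A : 'M[R]_(m1, n1)) (B : 'M[R]_(m2, n2))
  : 'M[R]_(m1 * m2, n1 * n2) :=
  \matrix_(r, s) (A (divord r) (divord s) * B (modord r) (modord s)).

Definition khatri_rao (R : pzRingType) p q m (A : 'M[R]_(p, m)) (B : 'M[R]_(q, m))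
  : 'M[R]_(p * q, m) :=
  \matrix_(r, j) (A (divord r) j * B (modord r) j).

Fixpoint khatri_rao_big (R : pzRingType) k c N : ('I_N -> 'M[R]_(k, c)) -> 'M[R]_(k ^ N, c) :=
  match N with
  | 0 => fun _ => const_mx 1
  | N'.+1 => fun F =>
      castmx (esym (expnS k N'), erefl c)
        (khatri_rao (F ord0) (khatri_rao_big (fun i => F (lift ord0 i))))
  end.

Definition ones (R : pzRingType) m : 'cV[R]_m := const_mx 1.
Definition delta (R : pzRingType) m (j : 'I_m) : 'cV[R]_m := \col_r (r == j)%:R.

Definition Pmat (R : pzRingType) n (s : 'S_n) : 'M[R]_n :=
  \matrix_(i, j) (i == s j)%:R.

Lemma Phi_rows k : (1 * k * 1 = k)%N.
Proof. by rewrite mul1n muln1. Qed.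

Lemma Phi_cols n k (i : 'I_n) : (k ^ i * k * k ^ (n - i.+1) = k ^ n)%N.
Proof. by rewrite -expnSr -expnD subnKC // ltn_ord. Qed.

(* Phi_i = 1_{k^(i-1)}^T (x) I_k (x) 1_{k^(n-i)}^T   (here i is 0-based) *)
Definition Phi (R : pzRingType) n k (i : 'I_n) : 'M[R]_(k, k ^ n) :=
  castmx (Phi_rows k, Phi_cols k i)
    (kron (kron (ones R (k ^ i))^T (1%:M : 'M[R]_k)) (ones R (k ^ (n - i.+1)))^T).

Definition Tmat (R : pzRingType) n k (s : 'S_n) : 'M[R]_(k ^ n) :=
  khatri_rao_big (fun j : 'I_n => Phi R k (s^-1%g j)).

Definition sgn (R : pzRingType) n (s : 'S_n) : R := (-1) ^+ odd_perm s.

(* A game in G_[n;k]: payoff c i x of player i at profile x (x j = strategy of j). *)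
Definition profile n k := {ffun 'I_n -> 'I_k}.
Definition game (R : Type) n k := 'I_n -> profile n k -> R.

Definition kron_profile (R : pzRingType) n k (x : profile n k) : 'cV[R]_(k ^ n) :=
  khatri_rao_big (fun j => delta R (x j)).

(* V_i^c: the row vector with c_i(x) = V_i^c (x_1 (x) ... (x) x_n)
   (the kron_profile x are exactly the standard basis vectors of R^(k^n)). *)
Definition Vi (R : pzRingType) n k (c : game R n k) (i : 'I_n) : 'rV[R]_(k ^ n) :=
  \sum_(x : profile n k) c i x *: (kron_profile R x)^T.

Definition VG (R : pzRingType) n k (c : game R n k) : 'rV[R]_(n * k ^ n) :=
  \row_r (Vi c (divord r)) 0 (modord r).

Definition perm_profile n k (s : 'S_n) (x : profile n k) : profile n k :=
  [ffun j => x (s^-1%g j)].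

Definition skew_symmetric (R : pzRingType) n k (c : game R n k) : Prop :=
  forall (s : 'S_n) (i : 'I_n) (x : profile n k),
    c i x = sgn R s * c (s i) (perm_profile s x).

From mathcomp Require Import all_boot all_order all_algebra.
From mathcomp Require Import fingroup perm.
Import GRing.Theory Num.Theory.
Local Open Scope ring_scope.
Set Implicit Arguments. Unset Strict Implicit. Unset Printing Implicit Defensive.

(* Index the entries of V_G by pairs (j, y) of a player and a profile: the
   entry at (j, y) is c_j(y).  Every column (j, y) of P_s (x) T_s contains a
   single 1, in row (s j, s.y) where s.y = (y_{s^-1(1)}, ..., y_{s^-1(n)}),
   because the Khatri-Rao factors Phi_{s^-1(1)}, ..., Phi_{s^-1(n)} read the
   strategies of y in the order s^-1.  So the (j, y) entry of
   V_G (P_s (x) sgn(s) T_s) is sgn(s) c_{s j}(s.y), and the matrix identity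
   is skew-symmetry read entrywise. *)

Lemma divord_modord_inj m d (r r' : 'I_(m * d)) :
  divord r = divord r' -> modord r = modord r' -> r = r'.
Proof.
move=> /(congr1 val) /= eq_div /(congr1 val) /= eq_mod; apply/val_inj.
by rewrite /= (divn_eq r d) (divn_eq r' d) eq_div eq_mod.
Qed.

Lemma pair_index_proof m d (i : 'I_m) (j : 'I_d) : (i * d + j < m * d)%N.
Proof.
apply: (@leq_trans (i.+1 * d)); first by rewrite mulSn addnC ltn_add2r.
by rewrite leq_mul2r ltn_ord orbT.
Qed.

Definition pair_index m d (i : 'I_m) (j : 'I_d) : 'I_(m * d) :=
  Ordinal (pair_index_proof i j).

Lemma divord_pair_index m d (i : 'I_m) (j : 'I_d) : divord (pair_index i j) = i.
Proof.
apply/val_inj => /=; rewrite divnMDl ?divn_small ?addn0 //.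
by case: d j => [[]|].
Qed.

Lemma modord_pair_index m d (i : 'I_m) (j : 'I_d) : modord (pair_index i j) = j.
Proof. by apply/val_inj => /=; rewrite modnMDl modn_small. Qed.

Lemma digit_modn_expn K N e r : (e < N)%N ->
  ((r %% K ^ N) %/ K ^ e %% K = r %/ K ^ e %% K)%N.
Proof. by move=> lteN; rewrite !modn_divl -expnS modn_dvdm // dvdn_exp2l. Qed.

Section Digits.

Variable k : nat.

(* Entry i is digit number N - 1 - i of r in base k.+1: the first factor of
   a Kronecker product is the most significant one. *)
Definition digits N (r : 'I_(k.+1 ^ N)) : profile N k.+1 :=
  [ffun i : 'I_N => Ordinal (ltn_pmod (r %/ k.+1 ^ (N - i.+1)) (ltn0Sn k))].

Lemma digits_head N (e : (k.+1 ^ N.+1 = k.+1 * k.+1 ^ N)%N) r :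
  digits r ord0 = divord (cast_ord e r).
Proof.
apply/val_inj; rewrite /= ffunE /= subn1 /= modn_small //.
by rewrite ltn_divLR ?expn_gt0 // -expnS.
Qed.

Lemma digits_tail N (e : (k.+1 ^ N.+1 = k.+1 * k.+1 ^ N)%N) r i :
  digits r (lift ord0 i) = digits (modord (cast_ord e r)) i.
Proof.
apply/val_inj; rewrite /= !ffunE /= /bump leq0n add1n subSS digit_modn_expn //.
by rewrite ltn_subrL ltn0Sn /=; case: N i {e r} => [[]|].
Qed.

Lemma digits_inj N : injective (@digits N).
Proof.
elim: N => [|N IH] r r' eq_rr'.
  apply/val_inj; case: r r' {eq_rr'} => [a lt_a] [b lt_b] /=; move: lt_a lt_b.
  by rewrite expn0 !ltnS !leqn0 => /eqP-> /eqP->.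
apply: (@cast_ord_inj _ _ (expnS k.+1 N)); apply: divord_modord_inj.
  by rewrite -!digits_head eq_rr'.
by apply: IH; apply/ffunP => i; rewrite -!digits_tail eq_rr'.
Qed.

Lemma digits_bij N : bijective (@digits N).
Proof. by apply: inj_card_bij; [exact: digits_inj | rewrite card_ffun !card_ord]. Qed.

Lemma eq_divord_digits m N (r r' : 'I_(m * k.+1 ^ N)) :
  (divord r == divord r') && (digits (modord r) == digits (modord r')) = (r == r').
Proof.
apply/andP/eqP => [[/eqP eq_div /eqP/digits_inj eq_mod]|->]; last by rewrite !eqxx.
exact: divord_modord_inj.
Qed.

Lemma divord_digits_surj m N (i : 'I_m) (x : profile N k.+1) :
  exists r : 'I_(m * k.+1 ^ N), divord r = i /\ digits (modord r) = x.
Proof.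
have [g _ digitsK] := digits_bij N.
exists (pair_index i (g x)).
by rewrite divord_pair_index modord_pair_index digitsK.
Qed.

End Digits.

Section Entries.

Variables (R : comPzRingType) (k : nat).

Lemma khatri_rao_big_entry c N (F : 'I_N -> 'M[R]_(k.+1, c)) r j :
  khatri_rao_big F r j = \prod_(i < N) F i (digits r i) j.
Proof.
elim: N F r => [|N IH] F r /=; first by rewrite big_ord0 mxE.
rewrite castmxE mxE cast_ord_id IH big_ord_recl -digits_head.
by under eq_bigr do rewrite -digits_tail.
Qed.

Lemma prod_eq_ffun N K (f g : profile N K) :
  \prod_(j < N) ((f j == g j)%:R : R) = (f == g)%:R.
Proof.
have [->|neq_fg] := eqVneq f g; first by rewrite big1 // => j _; rewrite eqxx.
have [j neq_fgj] : exists j, f j != g j.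
  apply/existsP; rewrite -negb_forall; apply: contraNN neq_fg => /forallP eq_fg.
  by apply/eqP/ffunP => j; apply/eqP.
by rewrite (bigD1 j) //= (negbTE neq_fgj) mul0r.
Qed.

Lemma Phi_entry n (i : 'I_n) a r : Phi R k.+1 i a r = (a == digits r i)%:R.
Proof.
rewrite /Phi castmxE /kron !mxE /= mul1r mulr1; congr (_ %:R).
by rewrite -val_eqE /= !ffunE /= divn1 modn_small.
Qed.

Lemma Tmat_entry n (s : 'S_n) r col :
  Tmat R k.+1 s r col = (digits r == perm_profile s (digits col))%:R.
Proof.
rewrite /Tmat khatri_rao_big_entry -prod_eq_ffun.
by apply: eq_bigr => j _; rewrite Phi_entry !ffunE.
Qed.

Lemma kron_profile_entry n (x : profile n k.+1) r :
  kron_profile R x r 0 = (digits r == x)%:R.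
Proof.
rewrite /kron_profile khatri_rao_big_entry -prod_eq_ffun.
by apply: eq_bigr => j _; rewrite mxE.
Qed.

Lemma Vi_entry n (c : game R n k.+1) i r : Vi c i 0 r = c i (digits r).
Proof.
rewrite /Vi summxE (bigD1 (digits r)) //= big1 ?addr0.
  by rewrite !mxE kron_profile_entry eqxx mulr1.
by move=> x /negbTE neq_x; rewrite !mxE kron_profile_entry eq_sym neq_x mulr0.
Qed.

Lemma VG_entry n (c : game R n k.+1) col :
  VG c 0 col = c (divord col) (digits (modord col)).
Proof. by rewrite mxE Vi_entry. Qed.

Lemma kron_Pmat_Tmat_entry n (s : 'S_n) a r col :
  kron (Pmat R s) (a *: Tmat R k.+1 s) r col =
  a * ((divord r == s (divord col)) &&
       (digits (modord r) == perm_profile s (digits (modord col))))%:R.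
Proof. by rewrite !mxE Tmat_entry mulrCA -natrM mulnb. Qed.

Lemma mulmx_row_indicator m n (v : 'rV[R]_m) (M : 'M[R]_(m, n)) col r0 a :
  (forall r, M r col = a * (r == r0)%:R) -> (v *m M) 0 col = a * v 0 r0.
Proof.
move=> M_col; rewrite mxE (bigD1 r0) //= big1 ?addr0.
  by rewrite M_col eqxx mulr1 mulrC.
by move=> r /negbTE neq_r; rewrite M_col neq_r !mulr0.
Qed.

Lemma VG_mul_kron_entry n (c : game R n k.+1) (s : 'S_n) col :
  (VG c *m kron (Pmat R s) (sgn R s *: Tmat R k.+1 s)) 0 col =
  sgn R s * c (s (divord col)) (perm_profile s (digits (modord col))).
Proof.
have [r0 [div_r0 digits_r0]] :=
  divord_digits_surj (s (divord col)) (perm_profile s (digits (modord col))).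
rewrite (@mulmx_row_indicator _ _ _ _ _ r0 (sgn R s)) => [|r].
  by rewrite VG_entry div_r0 digits_r0.
by rewrite kron_Pmat_Tmat_entry -div_r0 -digits_r0 eq_divord_digits.
Qed.

End Entries.

Theorem theorem3p17 (R : realFieldType) (n k : nat) (hn : (2 <= n)%N) (hk : (1 <= k)%N)
  (c : game R n k) :
  skew_symmetric c <->
  (forall s : 'S_n, VG c = VG c *m kron (Pmat R s) (sgn R s *: Tmat R k s)).
Proof.
case: k hk c => // k _ c; split=> [skew s | VG_fixed s i x].
  by apply/rowP => col; rewrite VG_mul_kron_entry VG_entry -skew.
have [col [<- <-]] := divord_digits_surj i x.
by have /rowP/(_ col) := VG_fixed s; rewrite VG_mul_kron_entry VG_entry.
Qed.
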